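(* Let $\mathcal{C}$ be a finite set and $\mathcal{T}$ a finite set, and let $(Y,T)$ be a pair of random variables with joint distribution $P_{Y,T}$ on $\mathcal{C}\times\mathcal{T}$, where $P_Y(y)>0$ for every $y\in\mathcal{C}$. For a nonempty subset $A\subseteq\mathcal{C}$ let $P_{T|Y\in A}$ denote the conditional distribution of $T$ given the event $\{Y\in A\}$, and for $y\in\mathcal{C}$ let $P_{T|Y=y}$ denote the conditional distribution of $T$ given $\{Y=y\}$. Then $$\max_{\emptyset\neq A\subseteq \mathcal{C}} D\big(P_{T|Y\in A}\,\big\|\,P_{T}\big) \;=\; \max_{y\in \mathcal{C}} D\big(P_{T|Y=y}\,\big\|\,P_{T}\big),$$ where $P_T$ is the marginal distribution of $T$ and $D(\cdot\|\cdot)$ is the Kullback–Leibler divergence.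
   Context: $D(P\|Q)=\sum_{t\in\mathcal{T}}P(t)\log\frac{P(t)}{Q(t)}$ (with the conventions $0\log\frac{0}{q}=0$). In the paper, $Y$ is a class label and $T$ is the quantized output of a neuron of a neural network; the quantity $\max_{y} D(P_{T|Y=y}\|P_T)$ is called the Kullback–Leibler selectivity of the neuron. *)

From mathcomp Require Import all_boot all_order all_algebra.
From mathcomp Require Import all_classical all_reals all_analysis.
Set Implicit Arguments. Unset Strict Implicit. Unset Printing Implicit Defensive.
Import Order.TTheory GRing.Theory Num.Theory.
Local Open Scope ring_scope.

Definition KL {R : realType} {T : finType} (P Q : T -> R) : R :=
  \sum_(t : T) (if P t == 0 then 0 else P t * ln (P t / Q t)).

Definition probY {R : realType} {C T : finType} (P : {ffun C * T -> R})
  (A : {set C}) : R := \sum_(y in A) \sum_(t : T) P (y, t).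

Definition margT {R : realType} {C T : finType} (P : {ffun C * T -> R})
  (t : T) : R := \sum_(y : C) P (y, t).

Definition condT {R : realType} {C T : finType} (P : {ffun C * T -> R})
  (A : {set C}) (t : T) : R := (\sum_(y in A) P (y, t)) / probY P A.

Definition is_max_over {R : realType} {I : finType} (S : pred I) (f : I -> R)
  (v : R) : Prop := (exists2 i, S i & f i = v) /\ (forall i, S i -> f i <= v).

From mathcomp Require Import all_boot all_order all_algebra.
From mathcomp Require Import all_classical all_reals all_analysis.
From mathcomp Require Import ring lra.
Set Implicit Arguments. Unset Strict Implicit. Unset Printing Implicit Defensive.
Import Order.TTheory GRing.Theory Num.Theory.
Local Open Scope ring_scope.

(* By the log-sum inequality, applied for each t to the numbers P(y,t) and
   P_Y(y) P_T(t) with y ranging over A, the divergence is convex under mixing: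
   P_Y(A) D(P_{T|Y in A} || P_T) <= sum_(y in A) P_Y(y) D(P_{T|Y=y} || P_T).
   Hence the divergence for A is at most a weighted average of the divergences
   of its points, so at most their maximum; conversely singletons are among
   the nonempty subsets. *)

Section RelativeEntropy.
Variable R : realType.

Lemma le_1BV_ln (x : R) : 0 < x -> 1 - x^-1 <= ln x.
Proof.
move=> x_gt0.
have : ln (1 + (x^-1 - 1)) <= x^-1 - 1.
  by apply: le_ln1Dx; rewrite ltrBrDr addNr invr_gt0.
by rewrite addrCA subrr addr0 lnV ?posrE //; lra.
Qed.

Definition klterm (p q : R) : R :=
  if p == 0 then 0 else p * ln (p / q).

Lemma KLE (T : finType) (P Q : T -> R) :
  KL P Q = \sum_t klterm (P t) (Q t).
Proof. by []. Qed.

Lemma mulr_klterm_div (s x q : R) : 0 < s ->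
  s * klterm (x / s) q = klterm x (s * q).
Proof.
move=> s_gt0; rewrite /klterm mulf_eq0 invr_eq0 (gt_eqF s_gt0) orbF.
case: eqP => _; first by rewrite mulr0.
by rewrite mulrA mulrCA divff ?gt_eqF // mulr1 invfM mulrA.
Qed.

(* The tangent line of the convex function [a |-> a ln (a / b)] at [a = c b]. *)
Lemma klterm_ge_tangent (a b c : R) :
  0 <= a -> 0 < b -> 0 < c -> a * ln c + a - b * c <= klterm a b.
Proof.
move=> a_ge0 b_gt0 c_gt0; rewrite /klterm.
have [->|a_neq0] := eqVneq a 0.
  by rewrite mul0r !add0r oppr_le0 mulr_ge0 // ltW.
have a_gt0 : 0 < a by rewrite lt_def a_neq0.
have x_gt0 : 0 < a / (b * c) by rewrite divr_gt0 ?mulr_gt0.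
have split_ln : ln (a / b) = ln c + ln (a / (b * c)).
  rewrite -lnM ?posrE ?divr_gt0 ?mulr_gt0 //; congr ln; field.
  by rewrite !gt_eqF.
have tangent : a - b * c <= a * ln (a / (b * c)).
  have -> : a - b * c = a * (1 - (a / (b * c))^-1).
    by rewrite invf_div; field; rewrite !gt_eqF.
  by rewrite ler_pM2l // le_1BV_ln.
by rewrite split_ln mulrDr -addrA lerD2l.
Qed.

Lemma klterm_sum_le (I : finType) (r : pred I) (a b : I -> R) :
  (forall i, r i -> 0 <= a i) -> (forall i, r i -> 0 < b i) ->
  klterm (\sum_(i | r i) a i) (\sum_(i | r i) b i)
    <= \sum_(i | r i) klterm (a i) (b i).
Proof.
move=> a_ge0 b_gt0.
set A := \sum_(i | r i) a i; set B := \sum_(i | r i) b i.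
rewrite {1}/klterm; have [A0|A_neq0] := eqVneq A 0.
  apply: sumr_ge0 => i ri.
  by rewrite /klterm (psumr_eq0P a_ge0 A0) // eqxx.
have A_gt0 : 0 < A by rewrite lt_def A_neq0 sumr_ge0.
have B_gt0 : 0 < B.
  rewrite lt_def sumr_ge0 ?andbT => [|i ri]; last exact/ltW/b_gt0.
  apply: contra_neq A_neq0 => /(psumr_eq0P (fun i ri => ltW (b_gt0 i ri))) B0.
  by apply: big1 => i ri; move: (b_gt0 i ri); rewrite B0 // ltxx.
have AB_gt0 : 0 < A / B by rewrite divr_gt0.
(* The tangent lines at the common ratio [A / B] add up to [A ln (A / B)]. *)
apply: (@le_trans _ _ (\sum_(i | r i) (a i * ln (A / B) + a i - b i * (A / B)))).
  rewrite !big_split /= sumrN -!mulr_suml -/A -/B.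
  by rewrite mulrCA divff ?gt_eqF // mulr1 addrK.
by apply: ler_sum => i ri; rewrite klterm_ge_tangent ?a_ge0 ?b_gt0.
Qed.

End RelativeEntropy.

Lemma is_max_over_nonempty_subsets (R : realType) (C : finType)
    (f : {set C} -> R) (g : C -> R) :
  (forall y, f [set y] = g y) ->
  (forall A v, A != finset.set0 -> (forall y, y \in A -> g y <= v) -> f A <= v) ->
  forall v, is_max_over (fun A => A != finset.set0) f v <->
            is_max_over (fun _ => true) g v.
Proof.
move=> f_set1 f_le v.
have set1_neq0 y : [set y] != finset.set0.
  by apply/set0Pn; exists y; rewrite finset.in_set1.
split=> [[[A A_neq0 fA] f_le_v] | [[y _ gy] g_le_v]].
  have g_le_v y : g y <= v by rewrite -f_set1 f_le_v ?set1_neq0.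
  case/set0Pn: (A_neq0) => y0 y0A.
  have [y yA g_max] := arg_maxP g y0A.
  split=> [|z _]; last exact: g_le_v.
  by exists y => //; apply/eqP; rewrite eq_le g_le_v -fA f_le.
split=> [|A A_neq0]; first by exists [set y]; rewrite ?set1_neq0 ?f_set1.
by apply: f_le => // z _; apply: g_le_v.
Qed.

Section ConditionalDivergence.
Variables (R : realType) (C T : finType) (P : {ffun C * T -> R}).
Hypothesis P_ge0 : forall yt, 0 <= P yt.
Hypothesis PY_gt0 : forall y, 0 < probY P [set y].

Lemma probYE (A : {set C}) : probY P A = \sum_(y in A) probY P [set y].
Proof. by apply: eq_bigr => y _; rewrite /probY big_set1. Qed.

Lemma probY_gt0 (A : {set C}) : A != finset.set0 -> 0 < probY P A.
Proof.
case/set0Pn => y yA; rewrite probYE (bigD1 y) //= ltr_pwDl //.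
by apply: sumr_ge0 => z _; apply/ltW.
Qed.

Lemma margT_eq0 t : margT P t = 0 -> forall y, P (y, t) = 0.
Proof. by move=> /(psumr_eq0P (fun y _ => P_ge0 (y, t))) P0 y; apply: P0. Qed.

Lemma mulr_KL_condT1 y : probY P [set y] * KL (condT P [set y]) (margT P) =
  \sum_t klterm (P (y, t)) (probY P [set y] * margT P t).
Proof.
rewrite KLE mulr_sumr; apply: eq_bigr => t _.
by rewrite /condT big_set1 mulr_klterm_div.
Qed.

Lemma mulr_klterm_condT_le (A : {set C}) t : A != finset.set0 ->
  probY P A * klterm (condT P A t) (margT P t)
    <= \sum_(y in A) klterm (P (y, t)) (probY P [set y] * margT P t).
Proof.
move=> A_neq0; rewrite /condT mulr_klterm_div ?probY_gt0 //.
have [/margT_eq0 P0|qt_neq0] := eqVneq (margT P t) 0.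
  rewrite big1 => [|y _ //]; rewrite /klterm eqxx.
  by apply: sumr_ge0 => y _; rewrite P0 eqxx.
have qt_gt0 : 0 < margT P t by rewrite lt_def qt_neq0 sumr_ge0.
by rewrite probYE mulr_suml; apply: klterm_sum_le => y _ //; apply: mulr_gt0.
Qed.

Lemma mulr_KL_condT_le (A : {set C}) : A != finset.set0 ->
  probY P A * KL (condT P A) (margT P)
    <= \sum_(y in A) probY P [set y] * KL (condT P [set y]) (margT P).
Proof.
move=> A_neq0; rewrite KLE mulr_sumr.
rewrite [X in _ <= X](eq_bigr _ (fun y _ => mulr_KL_condT1 y)) exchange_big /=.
by apply: ler_sum => t _; apply: mulr_klterm_condT_le.
Qed.

Lemma KL_condT_le (A : {set C}) v : A != finset.set0 ->
  (forall y, y \in A -> KL (condT P [set y]) (margT P) <= v) ->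
  KL (condT P A) (margT P) <= v.
Proof.
move=> A_neq0 KL_le_v.
rewrite -(ler_pM2l (probY_gt0 A_neq0)) (le_trans (mulr_KL_condT_le A_neq0)) //.
rewrite probYE mulr_suml; apply: ler_sum => y yA.
by rewrite ler_pM2l // KL_le_v.
Qed.

End ConditionalDivergence.

Theorem lemma1 (R : realType) (C T : finType) (P : {ffun C * T -> R})
  (P_ge0 : forall yt, 0 <= P yt)
  (P_sum1 : \sum_(yt : C * T) P yt = 1)
  (PY_gt0 : forall y : C, 0 < probY P [set y]) :
  forall v : R,
    is_max_over (fun A : {set C} => A != finset.set0)
      (fun A => KL (condT P A) (margT P)) v
    <->
    is_max_over (fun _ : C => true)
      (fun y => KL (condT P [set y]) (margT P)) v.
Proof.
apply: is_max_over_nonempty_subsets => // A v A_neq0.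
exact: KL_condT_le.
Qed.
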